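(* Let $S\subset\mathbb R^d$ be a thin horizontal strip and let $K\subset S$ be a connected closed set that separates $\mathcal U^+(S)$ and $\mathcal U^-(S)$ (i.e. they lie in different connected components of $\mathbb R^d\setminus K$). Then $C_S\subset K$, where $C_S=\overline{\mathcal U^+(S)}\cap\overline{\mathcal U^-(S)}$.
   Context: $\pi_d$ is the last coordinate projection. $S\subset\mathbb R^d$ is horizontal if $\pi_d(S)$ is bounded and $\mathbb R^d\setminus S$ contains two distinct connected components with unbounded $\pi_d$-image: $\mathcal U^+(S)$ (bounded below) and $\mathcal U^-(S)$ (bounded above). A horizontal strip is a horizontal connected closed set $S$ with $\mathbb R^d\setminus S=\mathcal U^+(S)\cup\mathcal U^-(S)$. Thin means empty interior. *)

From mathcomp Require Import ssreflect ssrbool eqtype ssrnat fintype.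
From Stdlib Require Import Reals.
Open Scope R_scope.

(* Points of R^d with d = n.+1 >= 1 (so that pi_d makes sense). *)
Definition point (n : nat) := 'I_n.+1 -> R.
Definition rset (n : nat) := point n -> Prop.

Definition pi_d {n : nat} (x : point n) : R := x ord_max.

(* open ball for the sup norm (same topology as the Euclidean one) *)
Definition ball {n : nat} (x : point n) (r : R) : rset n :=
  fun y => forall i : 'I_n.+1, Rabs (y i - x i) < r.

Definition complement {n : nat} (A : rset n) : rset n := fun x => ~ A x.

Definition is_open {n : nat} (U : rset n) : Prop :=
  forall x, U x -> exists r, 0 < r /\ forall y, ball x r y -> U y.

Definition is_closed {n : nat} (A : rset n) : Prop := is_open (complement A).

Definition closure {n : nat} (A : rset n) : rset n :=
  fun x => forall r, 0 < r -> exists y, A y /\ ball x r y.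

Definition thin {n : nat} (A : rset n) : Prop :=
  ~ exists x r, 0 < r /\ forall y, ball x r y -> A y.

Definition connected {n : nat} (A : rset n) : Prop :=
  ~ exists U V : rset n, is_open U /\ is_open V /\
      (forall x, A x -> U x \/ V x) /\
      (exists x, A x /\ U x) /\ (exists x, A x /\ V x) /\
      (forall x, A x -> U x -> V x -> False).

Definition same_component {n : nat} (X : rset n) (x y : point n) : Prop :=
  exists C : rset n, (forall z, C z -> X z) /\ connected C /\ C x /\ C y.

Definition is_component {n : nat} (X C : rset n) : Prop :=
  exists x, X x /\ forall y, C y <-> same_component X x y.

Definition pi_bounded_below {n : nat} (A : rset n) : Prop :=
  exists m, forall x, A x -> m <= pi_d x.
Definition pi_bounded_above {n : nat} (A : rset n) : Prop :=
  exists M, forall x, A x -> pi_d x <= M.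
Definition pi_bounded {n : nat} (A : rset n) : Prop :=
  pi_bounded_below A /\ pi_bounded_above A.

Definition is_Uplus {n : nat} (S C : rset n) : Prop :=
  is_component (complement S) C /\ ~ pi_bounded C /\ pi_bounded_below C.
Definition is_Uminus {n : nat} (S C : rset n) : Prop :=
  is_component (complement S) C /\ ~ pi_bounded C /\ pi_bounded_above C.

Definition set_eq {n : nat} (A B : rset n) : Prop := forall x, A x <-> B x.

Definition horizontal {n : nat} (S : rset n) : Prop :=
  pi_bounded S /\
  exists Up Um, is_Uplus S Up /\ is_Uminus S Um /\ ~ set_eq Up Um.

Definition horizontal_strip {n : nat} (S : rset n) : Prop :=
  horizontal S /\ connected S /\ is_closed S /\
  forall Up Um, is_Uplus S Up -> is_Uminus S Um ->
    forall x, complement S x <-> (Up x \/ Um x).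

From mathcomp Require Import ssreflect ssrbool eqtype ssrnat seq fintype.
From Stdlib Require Import Reals.
From Stdlib Require Import Lra Psatz Classical FunctionalExtensionality.
Open Scope R_scope.

(* Suppose x lies in the closures of U^+ and U^- but not in K.  As
   the complement of K is open, some ball B(x, r) avoids K; pick y in U^+ and
   z in U^- inside that ball.  The segment [y, z] stays in the (convex) ball,
   hence in R^d \ K, and it is connected, so y and z lie in the same component
   of R^d \ K -- contradicting the separation of U^+ and U^-. *)

Definition path_continuous {n : nat} (q : R -> point n) : Prop :=
  forall s, 0 <= s <= 1 -> forall rho, 0 < rho -> exists d, 0 < d /\
    forall s', Rabs (s' - s) < d -> ball (q s) rho (q s').

Lemma path_open_near {n : nat} (q : R -> point n) (U : rset n) s :
  path_continuous q -> is_open U -> 0 <= s <= 1 -> U (q s) ->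
  exists d, 0 < d /\ forall s', Rabs (s' - s) < d -> U (q s').
Proof.
move=> Hq HU Hs Us.
case: (HU _ Us) => rho [Hrho Hball].
case: (Hq s Hs rho Hrho) => d [Hd Hnear].
by exists d; split => // s' Hs'; apply: Hball; apply: Hnear.
Qed.

(* If the path starts in U, there is a largest s0 such that q stays in U on
   [0, s0) -- the supremum of the parameters t with q([0, t]) in U. *)
Lemma maximal_prefix {n : nat} (q : R -> point n) (U : rset n) :
  U (q 0) ->
  exists s0, 0 <= s0 <= 1 /\ (forall s, 0 <= s < s0 -> U (q s)) /\
    forall t, 0 <= t <= 1 -> (forall s, 0 <= s <= t -> U (q s)) -> t <= s0.
Proof.
move=> U0.
set T := fun t => 0 <= t <= 1 /\ forall s, 0 <= s <= t -> U (q s).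
have Tbound : bound T by exists 1 => t [[? ?] _].
have T0 : T 0.
  split; first lra.
  by move=> s Hs; have -> : s = 0 by lra.
case: (completeness T Tbound (ex_intro _ 0 T0)) => s0 [Hub Hlub].
have Hs0 : 0 <= s0 <= 1.
  by split; [apply: Hub | apply: Hlub => t [[? ?] _]].
exists s0; split; [done | split]; last by move=> t Ht HU; apply: Hub.
move=> s Hs; apply: NNPP => notU.
have : s0 <= s.
  apply: Hlub => t [Ht HtU].
  by apply: Rnot_lt_le => Hlt; apply: notU; apply: HtU; lra.
lra.
Qed.

(* A continuous path in P cannot go from U to V when U, V are open sets
   separating P: the maximal U-prefix [0, s0) can neither end in U (it would
   extend past s0) nor in V (points just before s0 would lie in both). *)
Lemma path_no_separation {n : nat} (q : R -> point n) (P U V : rset n) :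
  path_continuous q -> (forall s, 0 <= s <= 1 -> P (q s)) ->
  is_open U -> is_open V ->
  (forall w, P w -> U w \/ V w) -> (forall w, P w -> U w -> V w -> False) ->
  U (q 0) -> ~ V (q 1).
Proof.
move=> Hq HP HU HV Hcov Hdis U0 V1.
case: (maximal_prefix q U U0) => s0 [Hs0 [Ubefore Hmax]].
case: (Hcov _ (HP s0 Hs0)) => Us0.
- case: (Req_dec s0 1) => [Es0 | Ns0].
    by apply: (Hdis (q 1)); [apply: HP; lra | rewrite -Es0 |].
  case: (path_open_near q U s0 Hq HU Hs0 Us0) => d [Hd Unear].
  set t := Rmin 1 (s0 + d / 2).
  have Ht : s0 < t <= s0 + d / 2 by split; [apply: Rmin_glb_lt | apply: Rmin_r]; lra.
  have : t <= s0; last lra.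
  apply: Hmax; first by split; [lra | apply: Rmin_l].
  move=> s Hs; case: (Rlt_le_dec s s0) => Hss; first by apply: Ubefore; lra.
  by apply: Unear; rewrite Rabs_right; lra.
- case: (Req_dec s0 0) => [Es0 | Ns0].
    by apply: (Hdis (q 0)); [apply: HP; lra | | rewrite -Es0].
  case: (path_open_near q V s0 Hq HV Hs0 Us0) => d [Hd Vnear].
  set t := Rmax 0 (s0 - d / 2).
  have Ht : 0 <= t < s0 /\ s0 - d / 2 <= t.
    by split; [split; [apply: Rmax_l | apply: Rmax_lub_lt] | apply: Rmax_r]; lra.
  apply: (Hdis (q t)); [apply: HP; lra | apply: Ubefore; lra |].
  by apply: Vnear; rewrite Rabs_left; lra.
Qed.

Lemma finite_bound {m : nat} (f : 'I_m -> R) : exists M, forall i, f i <= M.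
Proof.
suff [M HM] : exists M, forall i, i \in enum 'I_m -> f i <= M.
  by exists M => i; apply: HM; rewrite mem_enum.
elim: (enum 'I_m) => [|j l [M HM]]; first by exists 0.
exists (Rmax (f j) M) => i; rewrite in_cons => /orP [/eqP -> | Hi].
- exact: Rmax_l.
- exact: Rle_trans (HM i Hi) (Rmax_r _ _).
Qed.

Definition seg {n : nat} (y z : point n) (t : R) : point n :=
  fun i => y i + t * (z i - y i).

Definition segment {n : nat} (y z : point n) : rset n :=
  fun w => exists t, 0 <= t <= 1 /\ w = seg y z t.

Lemma seg0 {n : nat} (y z : point n) : seg y z 0 = y.
Proof. by apply: functional_extensionality => i; rewrite /seg; ring. Qed.

Lemma seg1 {n : nat} (y z : point n) : seg y z 1 = z.
Proof. by apply: functional_extensionality => i; rewrite /seg; ring. Qed.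

Lemma seg_seg {n : nat} (y z : point n) t1 t2 s :
  seg (seg y z t1) (seg y z t2) s = seg y z (t1 + s * (t2 - t1)).
Proof. by apply: functional_extensionality => i; rewrite /seg; ring. Qed.

Lemma seg_continuous {n : nat} (y z : point n) : path_continuous (seg y z).
Proof.
case: (finite_bound (fun i => Rabs (z i - y i))) => M HM.
have HM0 : 0 <= M by apply: Rle_trans (Rabs_pos _) (HM ord0).
move=> s _ rho Hrho; exists (rho / (M + 1)); split.
  by apply: Rdiv_lt_0_compat; lra.
move=> s' Hs' i; rewrite /seg.
have -> : y i + s' * (z i - y i) - (y i + s * (z i - y i))
          = (s' - s) * (z i - y i) by ring.
have Hs'' : Rabs (s' - s) * (M + 1) < rho.
  have -> : rho = rho / (M + 1) * (M + 1) by field; lra.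
  by apply: Rmult_lt_compat_r; lra.
have := HM i; have := Rabs_pos (s' - s); have := Rabs_pos (z i - y i).
rewrite Rabs_mult; nra.
Qed.

(* Segments are connected: a separation would split some sub-segment
   [seg t1, seg t2] with its ends on opposite sides. *)
Lemma segment_connected {n : nat} (y z : point n) : connected (segment y z).
Proof.
move=> [U [V [HU [HV [Hcov [[_ [[t1 [Ht1 ->]] U1]] [[_ [[t2 [Ht2 ->]] V2]] Hdis]]]]]]].
set y' := seg y z t1; set z' := seg y z t2.
apply: (path_no_separation (seg y' z') (segment y z) U V) => //.
- exact: seg_continuous.
- by move=> s Hs; exists (t1 + s * (t2 - t1)); split; [nra | rewrite seg_seg].
- by rewrite seg0.
- by rewrite seg1.
Qed.

Lemma ball_convex {n : nat} (x y z : point n) r :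
  ball x r y -> ball x r z -> forall w, segment y z w -> ball x r w.
Proof.
move=> Hy Hz _ [t [Ht ->]] i; rewrite /seg.
have -> : y i + t * (z i - y i) - x i
          = (1 - t) * (y i - x i) + t * (z i - x i) by ring.
apply: Rle_lt_trans (Rabs_triang _ _) _.
rewrite !Rabs_mult (Rabs_right (1 - t)) ?(Rabs_right t); try lra.
have := Hy i; have := Hz i.
set A := Rabs (y i - x i); set B := Rabs (z i - x i) => Bx Ax.
have : (1 - t) * A <= (1 - t) * r by apply: Rmult_le_compat_l; lra.
have : t * B <= t * r by apply: Rmult_le_compat_l; lra.
case: (Req_dec t 0) => [-> | Ht0]; first lra.
have : t * B < t * r by apply: Rmult_lt_compat_l; lra.
lra.
Qed.

Theorem mainTheorem10 (n : nat) (S K Up Um : rset n) :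
  horizontal_strip S -> thin S ->
  is_Uplus S Up -> is_Uminus S Um ->
  (forall x, K x -> S x) -> connected K -> is_closed K ->
  (forall x y, Up x -> Um y -> ~ same_component (complement K) x y) ->
  forall x, closure Up x -> closure Um x -> K x.
Proof.
move=> _ _ _ _ _ _ Kclosed Hsep x Hplus Hminus.
apply: NNPP => notKx.
case: (Kclosed x notKx) => r [Hr ball_avoids_K].
case: (Hplus r Hr) => y [Upy By].
case: (Hminus r Hr) => z [Umz Bz].
apply: (Hsep y z Upy Umz).
exists (segment y z); split; [|split; [|split]].
- by move=> w Hw; apply: ball_avoids_K; apply: ball_convex Hw.
- exact: segment_connected.
- by exists 0; split; [lra | rewrite seg0].
- by exists 1; split; [lra | rewrite seg1].
Qed.
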